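(* Let $\mathcal{A}$ be a finite-dimensional bialgebra over $\mathbb{C}$ with multiplication written by juxtaposition, unit $1_{\mathcal{A}}$, comultiplication $\Delta$ and counit $\epsilon$. Let $\rho:\mathcal{A}\to M_{d_\rho}(\mathbb{C})$ be a $d_\rho$-dimensional representation with matrix entries $\rho_{ab}(x)$, and let $(v_{ij})_{1\le i,j\le d_v}$ be a $d_v$-dimensional corepresentation of $\mathcal{A}$. Fix a basis $B(\mathcal{A})$ of $\mathcal{A}$ with dual basis $\{\delta_x\}_{x\in B(\mathcal{A})}$ of $\mathcal{A}^*$, $\delta_x(y)=\delta_{x,y}$. For $a,b\in\{1,\dots,d_\rho\}$, $i,j\in\{1,\dots,d_v\}$, $x,y\in B(\mathcal{A})$ define $$U^{ab}_{ij}=\rho_{ab}(v_{ij}),\quad R^{yx}_{ab}=(\delta_y\otimes\rho_{ab})(\Delta(x)),\quad V^{yx}_{ij}=\delta_y(x\,v_{ij}),\quad u_x=\delta_x(1_{\mathcal{A}}),\quad e_x=\epsilon(x).$$ Then for all $a,b,i,j,x,y$: (1) $\sum_{z\in B(\mathcal{A})}R^{yz}_{ab}V^{zx}_{ij}=\sum_{z\in B(\mathcal{A})}\sum_{k=1}^{d_v}\sum_{c=1}^{d_\rho}V^{yz}_{ik}\,R^{zx}_{ac}\,U^{cb}_{kj}$; (2) $\sum_{y\in B(\mathcal{A})}e_y V^{yx}_{ij}=\delta_{ij}\,e_x$; (3) $\sum_{x\in B(\mathcal{A})}R^{yx}_{ab}u_x=\delta_{ab}\,u_y$; (4) $\sum_{x\in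 B(\mathcal{A})}e_xu_x=1$.
   Context: A bialgebra is a unital associative algebra and a coassociative counital coalgebra such that $\Delta(xy)=\Delta(x)\Delta(y)$, $\Delta(1)=1\otimes1$ and $\epsilon(xy)=\epsilon(x)\epsilon(y)$. A $d$-dimensional representation is a linear map $\rho:\mathcal{A}\to M_d(\mathbb{C})$ with $\rho(1)=\mathbb{1}$ and $\rho(xy)=\rho(x)\rho(y)$. A $d$-dimensional corepresentation is a $d\times d$ matrix $(v_{ij})$ of elements of $\mathcal{A}$ with $\Delta(v_{ij})=\sum_{k=1}^d v_{ik}\otimes v_{kj}$ and $\epsilon(v_{ij})=\delta_{ij}$. *)

From HB Require Import structures.
From mathcomp Require Import all_boot all_order all_algebra.
From mathcomp Require Import all_field.
From mathcomp Require Import complex.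
From mathcomp Require Import Rstruct.
Set Implicit Arguments. Unset Strict Implicit. Unset Printing Implicit Defensive.
Import Order.TTheory GRing.Theory Num.Theory.
Local Open Scope ring_scope.

Definition C : fieldType := (Rdefinitions.R : rcfType)[i].

Section Bialg.
Variable A : falgType C.

Definition lin_fun (phi : A -> C) : Prop :=
  forall (a : C) (x y : A), phi (a *: x + y) = a * phi x + phi y.

(* An element of A (x) A is represented by a finite list of pure tensors
   [:: (x1,y1); ...; (xk,yk)] standing for  sum_i x_i (x) y_i.
   (phi (x) psi) applied to such a tensor: *)
Definition tev (phi psi : A -> C) (s : seq (A * A)) : C :=
  \sum_(p <- s) phi p.1 * psi p.2.

(* Equality in A (x) A: two tensors are equal iff all pure functionals
   phi (x) psi (phi, psi linear) agree on them (A is finite dimensional). *)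
Definition teq (s t : seq (A * A)) : Prop :=
  forall phi psi, lin_fun phi -> lin_fun psi -> tev phi psi s = tev phi psi t.

Definition tmul (s t : seq (A * A)) : seq (A * A) :=
  [seq (p.1 * q.1, p.2 * q.2) | p <- s, q <- t].

Record is_bialgebra (Delta : A -> seq (A * A)) (eps : A -> C) : Prop := {
  bi_Delta_lin : forall (a : C) (x y : A),
      teq (Delta (a *: x + y)) ([seq (a *: p.1, p.2) | p <- Delta x] ++ Delta y);
  (* coassociativity: (Delta (x) id) Delta = (id (x) Delta) Delta,
     tested on all pure functionals phi (x) psi (x) chi *)
  bi_coassoc : forall (x : A) (phi psi chi : A -> C),
      lin_fun phi -> lin_fun psi -> lin_fun chi ->
      \sum_(p <- Delta x) tev phi psi (Delta p.1) * chi p.2 =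
      \sum_(p <- Delta x) phi p.1 * tev psi chi (Delta p.2);
  bi_eps_lin : lin_fun eps;
  bi_counitl : forall x : A, \sum_(p <- Delta x) eps p.1 *: p.2 = x;
  bi_counitr : forall x : A, \sum_(p <- Delta x) eps p.2 *: p.1 = x;
  bi_Delta_mul : forall x y : A, teq (Delta (x * y)) (tmul (Delta x) (Delta y));
  bi_Delta_1 : teq (Delta 1) [:: (1, 1)];
  bi_eps_mul : forall x y : A, eps (x * y) = eps x * eps y
}.

Record is_representation (d : nat) (rho : A -> 'M[C]_d) : Prop := {
  rep_lin : forall (a : C) (x y : A), rho (a *: x + y) = a *: rho x + rho y;
  rep_1 : rho 1 = 1%:M;
  rep_mul : forall x y : A, rho (x * y) = rho x *m rho y
}.

Record is_corepresentation (Delta : A -> seq (A * A)) (eps : A -> C)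
    (d : nat) (v : 'I_d -> 'I_d -> A) : Prop := {
  corep_Delta : forall i j : 'I_d,
      teq (Delta (v i j)) [seq (v i k, v k j) | k <- enum 'I_d];
  corep_eps : forall i j : 'I_d, eps (v i j) = (i == j)%:R
}.

End Bialg.

From HB Require Import structures.
From mathcomp Require Import all_boot all_order all_algebra all_field.
Set Implicit Arguments. Unset Strict Implicit. Unset Printing Implicit Defensive.
Import Order.TTheory GRing.Theory Num.Theory.
Local Open Scope ring_scope.

(** Each identity is a linear functional evaluated at one element of A,
    written in coordinates: expanding the argument in the basis [X] turns
    [phi w] into [\sum_z coord X z w * phi X_z].  Thus (2) is
    [eps (X_x v_ij) = eps X_x * eps v_ij], (3) is [Delta 1 = 1 (x) 1],
    (4) is [eps 1 = 1], and (1) computes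
    [(delta_y (x) rho_ab) (Delta (X_x v_ij))] in two ways, using that
    [Delta] is multiplicative, [v] is a corepresentation and [rho] is
    multiplicative. *)

Section LinearFunctionals.
Variable A : falgType C.
Implicit Types (phi psi : A -> C) (w : A).

Lemma lin_fun0 phi : lin_fun phi -> phi 0 = 0.
Proof.
move=> phiL; have := phiL 1 0 0; rewrite scaler0 addr0 mul1r.
by move/(congr1 (fun t => t - phi 0)); rewrite subrr addrK.
Qed.

Lemma lin_funD phi : lin_fun phi -> forall w1 w2, phi (w1 + w2) = phi w1 + phi w2.
Proof. by move=> phiL w1 w2; have := phiL 1 w1 w2; rewrite scale1r mul1r. Qed.

Lemma lin_funZ phi : lin_fun phi -> forall a w, phi (a *: w) = a * phi w.
Proof. by move=> phiL a w; have := phiL a w 0; rewrite addr0 lin_fun0 // addr0. Qed.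

Lemma lin_fun_sum phi (I : Type) (r : seq I) (P : pred I) (F : I -> A) :
  lin_fun phi -> phi (\sum_(i <- r | P i) F i) = \sum_(i <- r | P i) phi (F i).
Proof.
move=> phiL; elim: r => [|i r IHr]; first by rewrite !big_nil lin_fun0.
by rewrite !big_cons; case: (P i); rewrite ?lin_funD ?IHr.
Qed.

Lemma lin_fun_coord n (X : n.-tuple A) (z : 'I_n) : lin_fun (coord X z).
Proof. by move=> a w1 w2; rewrite linearD linearZ. Qed.

Lemma lin_fun_lmul phi (p : A) : lin_fun phi -> lin_fun (fun w => phi (p * w)).
Proof. by move=> phiL a w1 w2; rewrite mulrDr -scalerAr phiL. Qed.

Lemma lin_fun_rmul phi (p : A) : lin_fun phi -> lin_fun (fun w => phi (w * p)).
Proof. by move=> phiL a w1 w2; rewrite mulrDl -scalerAl phiL. Qed.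

Lemma lin_fun_rep_entry d (rho : A -> 'M[C]_d) (a b : 'I_d) :
  is_representation rho -> lin_fun (fun w => rho w a b).
Proof. by case=> rhoL _ _ c w1 w2; rewrite rhoL !mxE. Qed.

Lemma lin_fun_coord_expand n (X : n.-tuple A) phi w :
  lin_fun phi -> basis_of fullv X ->
  \sum_(z < n) phi (tnth X z) * coord X z w = phi w.
Proof.
move=> phiL X_basis; rewrite {2}(coord_basis X_basis (memvf w)) lin_fun_sum //.
by apply: eq_bigr => z _; rewrite lin_funZ // (tnth_nth 0) mulrC.
Qed.

Lemma tev_coord_expand n (X : n.-tuple A) phi psi (s : seq (A * A)) :
  lin_fun phi -> basis_of fullv X ->
  \sum_(z < n) phi (tnth X z) * tev (coord X z) psi s = tev phi psi s.
Proof.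
move=> phiL X_basis; rewrite /tev.
under eq_bigr do rewrite mulr_sumr.
rewrite exchange_big; apply: eq_bigr => p _.
rewrite -(lin_fun_coord_expand p.1 phiL X_basis) mulr_suml.
by apply: eq_bigr => z _; rewrite mulrA.
Qed.

End LinearFunctionals.

Section Bialgebra.
Variables (A : falgType C) (Delta : A -> seq (A * A)) (eps : A -> C).
Hypothesis bialg : is_bialgebra Delta eps.
Implicit Types (phi psi : A -> C) (x y : A).

(* [eps 1] is idempotent, and [eps 1 = 0] would make [eps] vanish, against
   the counit law at [1]. *)
Lemma bialg_eps1 : eps 1 = 1.
Proof.
have eps11 := bi_eps_mul bialg 1 1; rewrite mulr1 in eps11.
have [eps1_0|] := eqVneq (eps 1) 0; last by move/mulfI; apply; rewrite mulr1.
have := oner_neq0 A; rewrite -{1}(bi_counitl bialg 1) big1 ?eqxx // => p _.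
by rewrite -[p.1]mulr1 (bi_eps_mul bialg) eps1_0 mulr0 scale0r.
Qed.

Lemma lin_fun_tev_Delta phi psi :
  lin_fun phi -> lin_fun psi -> lin_fun (fun w => tev phi psi (Delta w)).
Proof.
move=> phiL psiL a x y; rewrite (bi_Delta_lin bialg a x y) //.
rewrite /tev big_cat big_map mulr_sumr.
by under eq_bigr do rewrite (lin_funZ phiL) -mulrA.
Qed.

Lemma tev_Delta1 phi psi :
  lin_fun phi -> lin_fun psi -> tev phi psi (Delta 1) = phi 1 * psi 1.
Proof. by move=> phiL psiL; rewrite (bi_Delta_1 bialg phiL psiL) /tev big_seq1. Qed.

Lemma tev_Delta_mul phi psi x y :
  lin_fun phi -> lin_fun psi ->
  tev phi psi (Delta (x * y)) =
  \sum_(p <- Delta x) tev (fun w => phi (p.1 * w)) (fun w => psi (p.2 * w)) (Delta y).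
Proof.
by move=> phiL psiL; rewrite (bi_Delta_mul bialg x y phiL psiL) /tev big_allpairs_dep.
Qed.

Lemma tev_Delta_corep d (v : 'I_d -> 'I_d -> A) phi psi (i j : 'I_d) :
  is_corepresentation Delta eps v -> lin_fun phi -> lin_fun psi ->
  tev phi psi (Delta (v i j)) = \sum_(k < d) phi (v i k) * psi (v k j).
Proof.
by move=> corep phiL psiL; rewrite (corep_Delta corep i j phiL psiL) /tev big_map big_enum.
Qed.

Lemma tev_Delta_mul_corep dr (rho : A -> 'M[C]_dr) dv (v : 'I_dv -> 'I_dv -> A)
    phi x (a b : 'I_dr) (i j : 'I_dv) :
  is_representation rho -> is_corepresentation Delta eps v -> lin_fun phi ->
  tev phi (fun w => rho w a b) (Delta (x * v i j)) =
  \sum_(k < dv) \sum_(c < dr)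
     tev (fun w => phi (w * v i k)) (fun w => rho w a c) (Delta x) * rho (v k j) c b.
Proof.
move=> rep corep phiL; have rhoL := lin_fun_rep_entry _ _ rep.
rewrite tev_Delta_mul //.
rewrite (eq_bigr (fun p => \sum_(k < dv) \sum_(c < dr)
                    phi (p.1 * v i k) * (rho p.2 a c * rho (v k j) c b))); last first.
  move=> p _; rewrite (tev_Delta_corep i j corep (lin_fun_lmul _ phiL) (lin_fun_lmul _ (rhoL a b))).
  by apply: eq_bigr => k _; rewrite (rep_mul rep) mxE mulr_sumr.
rewrite /tev exchange_big; apply: eq_bigr => k _.
rewrite exchange_big; apply: eq_bigr => c _.
by rewrite mulr_suml; apply: eq_bigr => p _; rewrite mulrA.
Qed.

End Bialgebra.

Theorem theorem1 (A : falgType C) (Delta : A -> seq (A * A)) (eps : A -> C)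
    (n : nat) (X : n.-tuple A)
    (dr : nat) (rho : A -> 'M[C]_dr)
    (dv : nat) (v : 'I_dv -> 'I_dv -> A) :
  is_bialgebra Delta eps ->
  is_representation rho ->
  is_corepresentation Delta eps v ->
  basis_of fullv X ->
  let U := fun (a b : 'I_dr) (i j : 'I_dv) => rho (v i j) a b in
  let R := fun (y x : 'I_n) (a b : 'I_dr) =>
             \sum_(p <- Delta (tnth X x)) coord X y p.1 * rho p.2 a b in
  let V := fun (y x : 'I_n) (i j : 'I_dv) => coord X y (tnth X x * v i j) in
  let u := fun x : 'I_n => coord X x 1 in
  let e := fun x : 'I_n => eps (tnth X x) in
  [/\ (forall (a b : 'I_dr) (i j : 'I_dv) (x y : 'I_n),
         \sum_(z < n) R y z a b * V z x i j =
         \sum_(z < n) \sum_(k < dv) \sum_(c < dr)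
            V y z i k * R z x a c * U c b k j),
      (forall (i j : 'I_dv) (x : 'I_n),
         \sum_(y < n) e y * V y x i j = (i == j)%:R * e x),
      (forall (a b : 'I_dr) (y : 'I_n),
         \sum_(x < n) R y x a b * u x = (a == b)%:R * u y)
    & \sum_(x < n) e x * u x = 1].
Proof.
move=> bialg rep corep X_basis U R V u e; rewrite {}/U {}/R {}/V {}/u {}/e.
have coordL := lin_fun_coord X.
have epsL := bi_eps_lin bialg.
have rhoL := lin_fun_rep_entry _ _ rep.
have RL y a b := lin_fun_tev_Delta bialg (coordL y) (rhoL a b).
split.
- move=> a b i j x y; rewrite (lin_fun_coord_expand _ (RL y a b) X_basis).
  rewrite (tev_Delta_mul_corep bialg (tnth X x) a b i j rep corep (coordL y)).
  rewrite [RHS]exchange_big; apply: eq_bigr => k _.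
  rewrite [RHS]exchange_big; apply: eq_bigr => c _.
  by rewrite -(tev_coord_expand _ _ (lin_fun_rmul (v i k) (coordL y)) X_basis) mulr_suml.
- move=> i j x; rewrite (lin_fun_coord_expand _ epsL X_basis).
  by rewrite (bi_eps_mul bialg) (corep_eps corep) mulrC.
- move=> a b y; rewrite (lin_fun_coord_expand _ (RL y a b) X_basis).
  by rewrite (tev_Delta1 bialg (coordL y) (rhoL a b)) (rep_1 rep) mxE mulrC.
- by rewrite (lin_fun_coord_expand _ epsL X_basis) (bialg_eps1 bialg).
Qed.
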